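(* Let $f,g_1,\dots,g_m,h_1,\dots,h_l\in\mathbb{R}[\mathbf{x}]$ and assume $R-\|\mathbf{x}\|_2^2\in\{g_1,\dots,g_m\}$ for some $R>0$. Then for every integer $k\ge k_{\min}$ the SOS semidefinite program $(\mathrm{SOS}_k)$ satisfies Slater's condition, i.e. there exist $\xi\in\mathbb{R}$, real symmetric positive definite matrices $\mathbf{G}_0$ (size $s(k)$), $\mathbf{G}_i$ (size $s(k-\lceil g_i\rceil)$, $i\in[m]$) and vectors $\mathbf{u}_j\in\mathbb{R}^{s(2(k-\lceil h_j\rceil))}$ satisfying its polynomial identity constraint. As a consequence, strong duality holds between $(\mathrm{SOS}_k)$ and $(\mathrm{MOM}_k)$, i.e. $\rho_k=\tau_k$, for every integer $k\ge k_{\min}$.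
   Context: $\mathbf{x}=(x_1,\dots,x_n)$; $\lceil p\rceil:=\lceil\deg(p)/2\rceil$; $\mathbb{N}^n_d:=\{\alpha\in\mathbb{N}^n:|\alpha|\le d\}$; $s(d):=\binom{n+d}{n}$; $\mathbf{v}_d=(\mathbf{x}^\alpha)_{\alpha\in\mathbb{N}^n_d}$; $k_{\min}:=\max\{\lceil f\rceil,\lceil g_i\rceil,\lceil h_j\rceil\}$. $(\mathrm{SOS}_k)$: $\rho_k:=\sup\{\xi:\ \mathbf{G}_i\succeq0,\ f-\xi=\mathbf{v}_k^\top\mathbf{G}_0\mathbf{v}_k+\sum_{i\in[m]}g_i\mathbf{v}_{k-\lceil g_i\rceil}^\top\mathbf{G}_i\mathbf{v}_{k-\lceil g_i\rceil}+\sum_{j\in[l]}h_j\mathbf{v}_{2(k-\lceil h_j\rceil)}^\top\mathbf{u}_j\}$, the supremum over $\xi\in\mathbb{R}$, symmetric $\mathbf{G}_0$ of size $s(k)$, $\mathbf{G}_i$ of size $s(k-\lceil g_i\rceil)$, and $\mathbf{u}_j\in\mathbb{R}^{s(2(k-\lceil h_j\rceil))}$, the equality being an identity of polynomials. $(\mathrm{MOM}_k)$: $\tau_k:=\inf\{L_{\mathbf{y}}(f):\ \mathbf{y}\in\mathbb{R}^{s(2k)},\ \mathbf{M}_k(\mathbf{y})\succeq0,\ y_{\mathbf{0}}=1,\ \mathbf{M}_{k-\lceil g_i\rceil}(g_i\mathbf{y})\succeq0\ (i\in[m]),\ \mathbf{M}_{k-\lceil h_j\rceil}(h_j\mathbf{y})=0\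 (j\in[l])\}$, where $\mathbf{y}=(y_\alpha)_{\alpha\in\mathbb{N}^n_{2k}}$, $L_{\mathbf{y}}(\sum_\alpha p_\alpha\mathbf{x}^\alpha)=\sum_\alpha p_\alpha y_\alpha$, $\mathbf{M}_d(\mathbf{y})=(y_{\alpha+\beta})_{\alpha,\beta\in\mathbb{N}^n_d}$, $\mathbf{M}_d(q\mathbf{y})=(\sum_\gamma q_\gamma y_{\alpha+\beta+\gamma})_{\alpha,\beta\in\mathbb{N}^n_d}$. *)

From mathcomp Require Import all_boot all_order all_algebra.
From mathcomp Require Import mpoly.
From mathcomp Require Import boolp classical_sets reals constructive_ereal ereal.
Set Implicit Arguments.
Unset Strict Implicit.
Unset Printing Implicit Defensive.
Import Order.TTheory GRing.Theory Num.Theory.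
Local Open Scope ring_scope.

Section POP.
Variables (R : realType) (n : nat).

(* total degree of a polynomial (deg 0 = 0) *)
Definition pdeg (p : {mpoly R[n]}) : nat := (msize p).-1.
(* \lceil p \rceil := \lceil deg(p)/2 \rceil *)
Definition hdeg (p : {mpoly R[n]}) : nat := uphalf (pdeg p).

Definition sdim (d : nat) : nat := #|{: 'X_{1..n < d.+1}}|.
(* the a-th exponent alpha in N^n_d (a fixed enumeration of N^n_d) *)
Definition mon (d : nat) (a : 'I_(sdim d)) : 'X_{1..n} :=
  bmnm (@enum_val _ (@predT 'X_{1..n < d.+1}) a).

(* v_d^T G v_d *)
Definition gram (d : nat) (G : 'M[R]_(sdim d)) : {mpoly R[n]} :=
  \sum_(a < sdim d) \sum_(b < sdim d) G a b *: 'X_[(mon a + mon b)%MM].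
(* v_d^T u *)
Definition lin (d : nat) (u : 'cV[R]_(sdim d)) : {mpoly R[n]} :=
  \sum_(a < sdim d) u a 0 *: 'X_[mon a].

End POP.

Definition psd (R : realType) (N : nat) (A : 'M[R]_N) : Prop :=
  A^T = A /\ forall x : 'cV[R]_N, 0 <= (x^T *m A *m x) 0 0.
Definition pd (R : realType) (N : nat) (A : 'M[R]_N) : Prop :=
  A^T = A /\ forall x : 'cV[R]_N, x != 0 -> 0 < (x^T *m A *m x) 0 0.

Section Relax.
Variables (R : realType) (n m l : nat).
Variables (f : {mpoly R[n]}) (g : 'I_m -> {mpoly R[n]}) (h : 'I_l -> {mpoly R[n]}).

Definition kmin : nat :=
  maxn (hdeg f) (maxn (\max_(i < m) hdeg (g i)) (\max_(j < l) hdeg (h j))).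

Definition sos_identity (k : nat) (xi : R) (G0 : 'M[R]_(sdim n k))
  (G : forall i : 'I_m, 'M[R]_(sdim n (k - hdeg (g i))))
  (u : forall j : 'I_l, 'cV[R]_(sdim n (2 * (k - hdeg (h j))))) : Prop :=
  f - xi%:MP = gram G0 + \sum_(i < m) g i * gram (G i)
                       + \sum_(j < l) h j * lin (u j).

Definition sos_feasible (k : nat) (xi : R) : Prop :=
  exists G0 : 'M[R]_(sdim n k),
  exists G : forall i : 'I_m, 'M[R]_(sdim n (k - hdeg (g i))),
  exists u : forall j : 'I_l, 'cV[R]_(sdim n (2 * (k - hdeg (h j)))),
    [/\ psd G0, forall i, psd (G i) & sos_identity xi G0 G u].

Definition sos_slater (k : nat) : Prop :=
  exists xi : R, exists G0 : 'M[R]_(sdim n k),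
  exists G : forall i : 'I_m, 'M[R]_(sdim n (k - hdeg (g i))),
  exists u : forall j : 'I_l, 'cV[R]_(sdim n (2 * (k - hdeg (h j)))),
    [/\ pd G0, forall i, pd (G i) & sos_identity xi G0 G u].

Definition rho (k : nat) : \bar R :=
  ereal_sup [set xi%:E | xi in [set xi | sos_feasible k xi]].

Definition yext (k : nat) (y : {ffun 'X_{1..n < (2 * k).+1} -> R})
  (a : 'X_{1..n}) : R := odflt 0 (omap y (insub a)).

Definition Ly (y : 'X_{1..n} -> R) (p : {mpoly R[n]}) : R :=
  \sum_(a <- msupp p) p@_a * y a.

Definition momM (d : nat) (y : 'X_{1..n} -> R) : 'M[R]_(sdim n d) :=
  \matrix_(a, b) y (mon a + mon b)%MM.

Definition locM (d : nat) (q : {mpoly R[n]}) (y : 'X_{1..n} -> R)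
  : 'M[R]_(sdim n d) :=
  \matrix_(a, b) Ly (fun c => y (mon a + mon b + c)%MM) q.

Definition mom_feasible (k : nat) (y : {ffun 'X_{1..n < (2 * k).+1} -> R})
  : Prop :=
  [/\ psd (momM k (yext y)),
      yext y 0%MM = 1,
      forall i, psd (locM (k - hdeg (g i)) (g i) (yext y))
    & forall j, locM (k - hdeg (h j)) (h j) (yext y) = 0].

Definition tau (k : nat) : \bar R :=
  ereal_inf [set (Ly (yext y) f)%:E | y in [set y : {ffun 'X_{1..n < (2 * k).+1} -> R} | mom_feasible y]].

End Relax.

(* The ball constraint makes the truncated quadratic module Q_k of (SOS_k)
   archimedean in degree 2k: every p of degree <= 2k satisfies T - p \in Q_k for
   some constant T.  For monomials this follows, by induction on |m|, from
     R^(j+1) - x^(2m) = R (R^j - x^(2m')) + (R - |x|^2) x^(2m')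
                        + sum_(s <> t) (x^m' x_s)^2          (m = m' + e_t).
   Slater's condition: T + (f - v_k^T v_k - sum_i g_i v^T v) \in Q_k, so f + T has
   a representation whose Gram matrices are I + (psd), hence positive definite.
   Strong duality: rho_k <= tau_k because tr (G M) >= 0 for psd G and M.  When
   rho_k is finite, 1 is an order unit of the cone Q_k, so the M. Riesz extension
   theorem extends p |-> p(0) from the constants, first to f with value rho_k,
   then to all polynomials of degree <= 2k, keeping it nonnegative on Q_k; its
   values on monomials form a feasible point of (MOM_k) with L_y(f) = rho_k. *)

From HB Require Import structures.
From mathcomp Require Import all_boot all_order all_algebra.
From mathcomp Require Import ssrcomplements mpoly.
From mathcomp Require Import ring lra zify.
From mathcomp Require Import boolp classical_sets reals constructive_ereal ereal.
Import Order.TTheory GRing.Theory Num.Theory.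
Local Open Scope ring_scope.
Set Implicit Arguments.
Unset Strict Implicit.
Unset Printing Implicit Defensive.

Section PsdMatrix.
Variable R : realType.
Implicit Types (N : nat).

Definition bform N (A : 'M[R]_N) (x y : 'cV[R]_N) : R := (x^T *m A *m y) 0 0.

Lemma bformDl N (A : 'M[R]_N) x y z s :
  bform A (x + s *: y) z = bform A x z + s * bform A y z.
Proof. by rewrite /bform linearD linearZ /= !mulmxDl -!scalemxAl !mxE. Qed.

Lemma bformDr N (A : 'M[R]_N) x y z s :
  bform A z (x + s *: y) = bform A z x + s * bform A z y.
Proof. by rewrite /bform mulmxDr -scalemxAr !mxE. Qed.

Lemma bform_mxD N (A B : 'M[R]_N) s x y :
  bform (A + s *: B) x y = bform A x y + s * bform B x y.
Proof.
rewrite /bform mulmxDr mulmxDl -scalemxAr -scalemxAl.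
by rewrite [(_ + _ : 'M_1) 0 0]mxE [(_ *: _ : 'M_1) 0 0]mxE.
Qed.

Lemma bformC N (A : 'M[R]_N) x y : A^T = A -> bform A x y = bform A y x.
Proof.
move=> symA; rewrite /bform -[in LHS](trmxK (_ *m y)) mxE.
by rewrite !trmx_mul trmxK symA mulmxA.
Qed.

Lemma bform_delta N (A : 'M[R]_N) a b :
  bform A (delta_mx a 0) (delta_mx b 0) = A a b.
Proof. by rewrite /bform trmx_delta -rowE -colE !mxE. Qed.

Lemma bform_col N (A : 'M[R]_N) x b : bform A x (delta_mx b 0) = (x^T *m col b A) 0 0.
Proof. by rewrite /bform -mulmxA -colE. Qed.

Lemma bform_xxT N (x v : 'cV[R]_N) : bform (v *m v^T) x x = (x^T *m v) 0 0 ^+ 2.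
Proof.
rewrite /bform mulmxA -(mulmxA _ _ x) mxE big_ord1 expr2; congr (_ * _).
by rewrite -[v^T *m x]trmxK trmx_mul trmxK mxE.
Qed.

Lemma mxtrace_mul_xxT N (x : 'cV[R]_N) (M : 'M[R]_N) :
  \tr (x *m x^T *m M) = bform M x x.
Proof. by rewrite -mulmxA mxtrace_mulC trace_mx11. Qed.

Lemma psd_bform_quad N (A : 'M[R]_N) x y s : psd A ->
  0 <= bform A x x + 2 * s * bform A x y + s ^+ 2 * bform A y y.
Proof.
case=> symA /(_ (x + s *: y)); rewrite -/(bform _ _ _) bformDl !bformDr.
by rewrite (bformC y x symA); congr (_ <= _); ring.
Qed.

Lemma psd_diag_ge0 N (A : 'M[R]_N) a : psd A -> 0 <= A a a.
Proof. by case=> _ /(_ (delta_mx a 0)); rewrite -/(bform _ _ _) bform_delta. Qed.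

Lemma psd_diag0_row N (A : 'M[R]_N) a b : psd A -> A a a = 0 -> A a b = 0.
Proof.
(* Along e_b + s e_a the form is A b b + 2 s A a b, negative for the s below. *)
move=> psdA Aaa; apply/eqP/negPn/negP => Aab_neq0.
have Aba : A b a = A a b by rewrite -{1}psdA.1 mxE.
have := psd_bform_quad (delta_mx b 0) (delta_mx a 0) (- (A b b + 1) / (2 * A a b)) psdA.
rewrite !bform_delta Aaa Aba.
have -> : 2 * (- (A b b + 1) / (2 * A a b)) * A a b = - (A b b + 1).
  by field; rewrite Aab_neq0.
lra.
Qed.

Lemma psd0 N : psd (0 : 'M[R]_N).
Proof. by split=> [|x]; rewrite ?trmx0 // mulmx0 mul0mx mxE. Qed.

Lemma psdD N (A B : 'M[R]_N) : psd A -> psd B -> psd (A + B).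
Proof.
case=> symA psdA [symB psdB]; split=> [|x]; first by rewrite linearD /= symA symB.
by rewrite mulmxDr mulmxDl mxE addr_ge0.
Qed.

Lemma psdZ N (A : 'M[R]_N) a : 0 <= a -> psd A -> psd (a *: A).
Proof.
move=> a_ge0 [symA psdA]; split=> [|x]; first by rewrite linearZ /= symA.
by rewrite -scalemxAr -scalemxAl mxE mulr_ge0.
Qed.

Lemma psd_xxT N (v : 'cV[R]_N) : psd (v *m v^T).
Proof.
split=> [|x]; first by rewrite trmx_mul trmxK.
by rewrite -/(bform _ _ _) bform_xxT sqr_ge0.
Qed.

Lemma pd_psd N (A : 'M[R]_N) : pd A -> psd A.
Proof.
case=> symA pdA; split=> // x; have [->|/pdA/ltW //] := eqVneq x 0.
by rewrite mulmx0 mxE.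
Qed.

Lemma pd_add1 N (A : 'M[R]_N) : psd A -> pd (1%:M + A).
Proof.
case=> symA psdA; split=> [|x x_neq0]; first by rewrite linearD /= trmx1 symA.
suff : 0 < (x^T *m x) 0 0.
  by rewrite mulmxDr mulmxDl mulmx1 [(_ + _ : 'M_(1, 1)) 0 0]mxE; have := psdA x; lra.
have sq_ge0 i : 0 <= x^T 0 i * x i 0 by rewrite mxE -expr2 sqr_ge0.
rewrite mxE lt_def sumr_ge0 // andbT; apply: contraNN x_neq0 => /eqP sum0.
apply/eqP/matrixP => i j; rewrite (ord1 j) !mxE.
have := psumr_eq0P (fun i _ => sq_ge0 i) sum0 (i := i) isT.
by rewrite mxE => /eqP; rewrite mulf_eq0 orbb => /eqP.
Qed.

Lemma psd_schur N (G : 'M[R]_N) p : psd G -> 0 < G p p ->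
  psd (G - (G p p)^-1 *: (col p G *m (col p G)^T)).
Proof.
move=> psdG Gpp_gt0; split.
  by rewrite linearB linearZ /= trmx_mul trmxK psdG.1.
move=> x; rewrite -/(bform _ _ _) -scaleNr bform_mxD bform_xxT -bform_col.
set c := G p p; set B := bform G x (delta_mx p 0).
have := psd_bform_quad x (delta_mx p 0) (- B / c) psdG.
rewrite bform_delta -/c -/B; congr (_ <= _); field; exact: lt0r_neq0.
Qed.

(* Induction on the number of nonzero diagonal entries of G: removing the
   rank-one part (G p p)^-1 G_p G_p^T keeps G psd and clears its p-th diagonal
   entry, while that part contributes a quadratic form of M to the trace. *)
Lemma psd_mxtrace_mul_ge0 N (G M : 'M[R]_N) : psd G -> psd M -> 0 <= \tr (G *m M).
Proof.
move=> psdG psdM; have [k ltk] := ubnP #|[set a | G a a != 0]|.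
elim: k G psdG ltk => // k IH G psdG ltk.
have [[p Gpp_neq0] | diag0] := pselect (exists p, G p p != 0); last first.
  have -> : G = 0.
    apply/matrixP => a b; rewrite mxE psd_diag0_row //.
    by apply/eqP/negPn/negP => Gaa; apply: diag0; exists a.
  by rewrite mul0mx linear0.
have Gpp_gt0 : 0 < G p p by rewrite lt_def Gpp_neq0 psd_diag_ge0.
set v := col p G; pose G' := G - (G p p)^-1 *: (v *m v^T).
have -> : G = G' + (G p p)^-1 *: (v *m v^T) by rewrite subrK.
rewrite mulmxDl -scalemxAl linearD linearZ /= mxtrace_mul_xxT.
apply: addr_ge0; last by apply: mulr_ge0; [rewrite invr_ge0 ltW | exact: psdM.2].
apply: IH (psd_schur psdG Gpp_gt0) _.
rewrite -ltnS (leq_trans _ ltk) // ltnS; apply: proper_card; apply/properP; split.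
  apply/fintype.subsetP => a; rewrite !inE; apply: contraNN => /eqP Gaa.
  by rewrite !mxE big_ord1 !mxE Gaa (psd_diag0_row p psdG Gaa) mul0r mulr0 subr0.
exists p; rewrite !inE // !mxE big_ord1 !mxE negbK; apply/eqP; field.
exact: lt0r_neq0.
Qed.

End PsdMatrix.

Section Degree.
Variables (n : nat) (R : ringType).
Implicit Types (p q : {mpoly R[n]}) (K : nat).

Definition deg_le p K : bool := all (fun m => mdeg m <= K)%N (msupp p).

Lemma deg_leP p K : reflect {in msupp p, forall m, mdeg m <= K}%N (deg_le p K).
Proof. exact: allP. Qed.

Lemma deg_le_trans p K K' : deg_le p K -> (K <= K')%N -> deg_le p K'.
Proof. by move=> /deg_leP dp le; apply/deg_leP => m /dp /leq_trans; apply. Qed.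

Lemma deg_leD p q K : deg_le p K -> deg_le q K -> deg_le (p + q) K.
Proof.
move=> /deg_leP dp /deg_leP dq; apply/deg_leP => m /msuppD_le.
by rewrite mem_cat => /orP[/dp|/dq].
Qed.

Lemma deg_leZ c p K : deg_le p K -> deg_le (c *: p) K.
Proof. by move=> /deg_leP dp; apply/deg_leP => m /msuppZ_le /dp. Qed.

Lemma deg_leN p K : deg_le p K -> deg_le (- p) K.
Proof. by move=> /deg_leP dp; apply/deg_leP => m; rewrite (perm_mem (msuppN p)) => /dp. Qed.

Lemma deg_le_sum (I : Type) (r : seq I) (P : pred I) (F : I -> {mpoly R[n]}) K :
  (forall i, P i -> deg_le (F i) K) -> deg_le (\sum_(i <- r | P i) F i) K.
Proof.
move=> dF; apply: (big_ind (deg_le^~ K)) => //; last by move=> *; exact: deg_leD.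
by rewrite /deg_le msupp0.
Qed.

Lemma deg_leM p q K1 K2 : deg_le p K1 -> deg_le q K2 -> deg_le (p * q) (K1 + K2).
Proof.
move=> /deg_leP dp /deg_leP dq; apply/deg_leP => m /msuppM_le /allpairsP.
by case=> -[m1 m2] /= [/dp d1 /dq d2 ->]; rewrite mdegD leq_add.
Qed.

Lemma deg_leX m K : (mdeg m <= K)%N -> deg_le 'X_[m] K.
Proof. by move=> dm; apply/deg_leP => m'; rewrite msuppX mem_seq1 => /eqP ->. Qed.

Lemma deg_leC c K : deg_le c%:MP K.
Proof.
apply/deg_leP => m; rewrite msuppC; case: eqP => // _.
by rewrite mem_seq1 => /eqP ->; rewrite mdeg0.
Qed.

Lemma deg_le_msize p K : deg_le p K = (msize p <= K.+1)%N.
Proof.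
apply/deg_leP/idP => [dp | lt_p m /msize_mdeg_lt lt_m]; last first.
  by rewrite -ltnS (leq_trans lt_m).
rewrite msizeE big_seq; apply: (big_ind (fun x => x <= K.+1)%N) => //.
  by move=> x y; rewrite geq_max => -> ->.
Qed.

End Degree.

Arguments deg_leX {n R m K}.

Lemma deg_le_hdeg (R : realType) n (p : {mpoly R[n]}) : deg_le p (2 * hdeg p).
Proof.
rewrite deg_le_msize /hdeg /pdeg uphalf_half.
by case: (msize p) => //= s; have := odd_double_half s; case: (odd s) => /=; lia.
Qed.

Lemma exists_submnm n (al : 'X_{1..n}) t : (t <= mdeg al)%N ->
  exists2 be : 'X_{1..n}, (be <= al)%MM & mdeg be = t.
Proof.
elim: t => [|t IH] le_t.
  by exists 0%MM; rewrite ?mdeg0 //; apply/mnm_lepP => i; rewrite mnm0E.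
have [be le_be dbe] := IH (ltnW le_t).
have [i lt_i] : exists i, (be i < al i)%N.
  apply/existsP; apply: contraLR le_t; rewrite negb_exists => /forallP ge.
  rewrite -leqNgt -dbe !mdegE; apply: leq_sum => i _.
  by rewrite leqNgt; apply: ge.
exists (be + U_(i))%MM; last by rewrite mdegD mdeg1 dbe addn1.
apply/mnm_lepP => j; rewrite mnmDE mnm1E.
by case: eqP => [<-|_]; rewrite ?addn1 ?addn0 //; move/mnm_lepP: le_be.
Qed.

Lemma mnm_split n (al : 'X_{1..n}) d1 d2 : (mdeg al <= d1 + d2)%N ->
  exists m1 m2 : 'X_{1..n}, [/\ (mdeg m1 <= d1)%N, (mdeg m2 <= d2)%N & al = m1 + m2]%MM.
Proof.
move=> le_al; have [be le_be dbe] := @exists_submnm n al (minn d1 (mdeg al)) (geq_minr _ _).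
have dal := congr1 mdeg (submK le_be); rewrite mdegD dbe in dal.
by exists be, (al - be)%MM; split; [rewrite dbe geq_minl | lia | rewrite addmC submK].
Qed.

Section Monomials.
Variables (n d : nat).

Lemma mon_mdeg (a : 'I_(sdim n d)) : (mdeg (mon a) <= d)%N.
Proof. by rewrite -ltnS bmdeg. Qed.

Lemma mon_surj (m : 'X_{1..n}) : (mdeg m <= d)%N -> exists a : 'I_(sdim n d), mon a = m.
Proof.
by rewrite -ltnS => dm; exists (enum_rank (BMultinom dm)); rewrite /mon enum_rankK.
Qed.

Lemma mon_inj : injective (@mon n d).
Proof. by move=> a b /val_inj /enum_val_inj. Qed.

End Monomials.

Section GramLin.
Variables (R : realType) (n d : nat).
Implicit Types (G : 'M[R]_(sdim n d)) (u : 'cV[R]_(sdim n d)).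

Lemma gram_is_linear : linear (@gram R n d).
Proof.
move=> a G H; rewrite /gram scaler_sumr -big_split; apply: eq_bigr => i _ /=.
rewrite scaler_sumr -big_split; apply: eq_bigr => j _ /=.
by rewrite !mxE scalerDl scalerA.
Qed.

HB.instance Definition _ :=
  GRing.isLinear.Build R 'M[R]_(sdim n d) {mpoly R[n]} *:%R (@gram R n d) gram_is_linear.

Lemma lin_is_linear : linear (@lin R n d).
Proof.
move=> a u v; rewrite /lin scaler_sumr -big_split; apply: eq_bigr => i _ /=.
by rewrite !mxE scalerDl scalerA.
Qed.

HB.instance Definition _ :=
  GRing.isLinear.Build R 'cV[R]_(sdim n d) {mpoly R[n]} *:%R (@lin R n d) lin_is_linear.

Lemma gram_xxT u : gram (u *m u^T) = lin u ^+ 2.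
Proof.
rewrite /gram /lin expr2 big_distrl; apply: eq_bigr => a _ /=.
rewrite big_distrr; apply: eq_bigr => b _ /=.
by rewrite !mxE big_ord1 !mxE -scalerAl -scalerAr scalerA mpolyXD.
Qed.

Lemma deg_le_gram G : deg_le (gram G) (2 * d).
Proof.
apply: deg_le_sum => a _; apply: deg_le_sum => b _; apply/deg_leZ/deg_leX.
by rewrite mdegD; have := mon_mdeg a; have := mon_mdeg b; lia.
Qed.

Lemma deg_le_lin u : deg_le (lin u) d.
Proof. by apply: deg_le_sum => a _; apply/deg_leZ/deg_leX/mon_mdeg. Qed.

Lemma lin_surj (p : {mpoly R[n]}) : deg_le p d -> exists u, lin u = p.
Proof.
move=> /deg_leP dp; exists (\col_a p@_(mon a)); apply/mpolyP => m.
rewrite /lin raddf_sum /=.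
under eq_bigr do rewrite mcoeffZ mcoeffX mxE.
have [/mon_surj [a0 <-] | gt_m] := leqP (mdeg m) d.
  rewrite (bigD1 a0) //= eqxx mulr1 big1 ?addr0 // => a ne_a.
  by rewrite (inj_eq (@mon_inj n d)) (negbTE ne_a) mulr0.
rewrite big1 => [|a _]; last first.
  by case: eqP => [eq_m|_]; [rewrite -eq_m ltnNge mon_mdeg in gt_m | rewrite mulr0].
apply/esym/memN_msupp_eq0; apply: contraTN gt_m => /dp.
by rewrite -leqNgt.
Qed.

End GramLin.

Section RieszFunctional.
Variables (R : realType) (n : nat) (y : 'X_{1..n} -> R).
Implicit Types (p q : {mpoly R[n]}).

Lemma Ly_bmnmE p K : (msize p <= K)%N -> Ly y p = \sum_(m : 'X_{1..n < K}) p@_m * y m.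
Proof.
move=> le_pK; pose I : subFinType _ := 'X_{1..n < K}.
rewrite /Ly (big_mksub I) ?msupp_uniq //=; last first.
  by move=> m /msize_mdeg_lt /leq_trans; apply.
by rewrite big_rmcond //= => m /memN_msupp_eq0 ->; rewrite mul0r.
Qed.

Lemma Ly_is_linear : linear_for *%R (Ly y).
Proof.
move=> a p q; pose K := maxn (msize p) (msize q).
have le_pK : (msize p <= K)%N by rewrite leq_maxl.
have le_qK : (msize q <= K)%N by rewrite leq_maxr.
have le_pqK : (msize (a *: p + q) <= K)%N.
  by rewrite (leq_trans (msizeD_le _ _)) // geq_max le_qK (leq_trans (msizeZ_le _ _)).
rewrite !(Ly_bmnmE le_pK, Ly_bmnmE le_qK, Ly_bmnmE le_pqK) big_distrr -big_split /=.
by apply: eq_bigr => m _; rewrite mcoeffD mcoeffZ mulrDl mulrA.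
Qed.

HB.instance Definition _ :=
  GRing.isLinear.Build R {mpoly R[n]} R *%R (Ly y) Ly_is_linear.

Lemma LyZ a p : Ly y (a *: p) = a * Ly y p.
Proof. exact: linearZ. Qed.

Lemma LyX m : Ly y 'X_[m] = y m.
Proof. by rewrite /Ly msuppX big_seq1 mcoeffX eqxx mul1r. Qed.

Lemma LyC c : Ly y c%:MP = c * y 0%MM.
Proof. by rewrite -LyX -LyZ -mul_mpolyC mpolyX0 mulr1. Qed.

Lemma Ly_mulX p m : Ly y (p * 'X_[m]) = Ly (fun c => y (m + c)%MM) p.
Proof.
rewrite /Ly (perm_big _ (msuppMX p m)) big_map; apply: eq_bigr => c _.
by rewrite mcoeffMX.
Qed.

Lemma Ly_gram d (G : 'M[R]_(sdim n d)) : Ly y (gram G) = \tr (G *m (momM d y)^T).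
Proof.
rewrite /gram raddf_sum; apply: eq_bigr => a _; rewrite mxE raddf_sum.
by apply: eq_bigr => b _; rewrite /= LyZ LyX !mxE.
Qed.

Lemma Ly_mul_gram d q (G : 'M[R]_(sdim n d)) :
  Ly y (q * gram G) = \tr (G *m (locM d q y)^T).
Proof.
rewrite /gram mulr_sumr raddf_sum; apply: eq_bigr => a _; rewrite mxE.
rewrite mulr_sumr raddf_sum; apply: eq_bigr => b _.
by rewrite /= -scalerAr LyZ Ly_mulX !mxE.
Qed.

Lemma Ly_mul_locM_eq0 e q p : locM e q y = 0 -> deg_le p (2 * e) -> Ly y (q * p) = 0.
Proof.
move=> locM0 /deg_leP dp; rewrite [p]mpolyE mulr_sumr raddf_sum big_seq big1 // => mm /dp.
rewrite mul2n -addnn => /mnm_split [m1 [m2 [d1 d2 ->]]].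
have [a1 <-] := mon_surj d1; have [a2 <-] := mon_surj d2.
rewrite /= -scalerAr LyZ Ly_mulX.
by have := congr1 (fun M : 'M_(sdim n e) => M a1 a2) locM0; rewrite !mxE => ->; rewrite mulr0.
Qed.

End RieszFunctional.

Section BallArchimedean.
Variables (R : realType) (n : nat) (Rad : R) (k d : nat).
Variable C : {mpoly R[n]} -> Prop.
Local Notation ball := (Rad%:MP - \sum_(t < n) 'X_t ^+ 2).
Hypotheses (Rad_gt0 : 0 < Rad) (le_k_d1 : (k <= d.+1)%N).
Hypotheses (C0 : C 0) (CDZ : forall a p q, 0 <= a -> C p -> C q -> C (a *: p + q)).
Hypotheses (C_sqr : forall p, deg_le p k -> C (p ^+ 2))
  (C_ball_sqr : forall p, deg_le p d -> C (ball * p ^+ 2)).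

Let CD p q : C p -> C q -> C (p + q).
Proof. by move=> Cp Cq; rewrite -[p]scale1r; apply: CDZ. Qed.

Let C_sum (I : Type) (r : seq I) (P : pred I) (F : I -> {mpoly R[n]}) :
  (forall i, P i -> C (F i)) -> C (\sum_(i <- r | P i) F i).
Proof. by move=> CF; apply: (big_ind C) => // p q; apply: CD. Qed.

Lemma C_pow_sub_sqrX j m : mdeg m = j -> (j <= k)%N ->
  C ((Rad ^+ j)%:MP - 'X_[m] ^+ 2).
Proof.
elim: j m => [|j IH] m dm le_jk.
  by move/eqP: dm; rewrite mdeg_eq0 => /eqP ->; rewrite mpolyX0 expr1n expr0 mpolyC1 subrr.
have [t m_t] : exists t, m t != 0%N.
  apply/existsP; rewrite -negb_forall; apply: contra_eqN dm => /forallP m0.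
  by rewrite mdegE big1 // => t _; apply/eqP; rewrite -[_ == _]negbK m0.
have le_t : (U_(t) <= m)%MM by rewrite lep1mP.
set m' := (m - U_(t))%MM; have Em : m = (m' + U_(t))%MM by rewrite submK.
have dm' : mdeg m' = j by move: dm; rewrite Em mdegD mdeg1 addn1 => -[].
have -> : (Rad ^+ j.+1)%:MP - 'X_[m] ^+ 2 = Rad *: ((Rad ^+ j)%:MP - 'X_[m'] ^+ 2)
    + (ball * 'X_[m'] ^+ 2 + \sum_(s < n | s != t) ('X_[m'] * 'X_s) ^+ 2).
  have -> : \sum_(s < n | s != t) ('X_[m'] * 'X_s) ^+ 2
      = 'X_[m'] ^+ 2 * \sum_(s < n | s != t) 'X_s ^+ 2 :> {mpoly R[n]}.
    by rewrite big_distrr; apply: eq_bigr => s _; rewrite exprMn.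
  by rewrite Em mpolyXD (bigD1 t) //= -mul_mpolyC exprS rmorphM /=; ring.
apply: CDZ; [exact: ltW | by apply: IH dm' _; lia | apply: CD].
  by apply/C_ball_sqr/deg_leX; lia.
apply: C_sum => s _; apply: C_sqr; rewrite -[k](subnKC (_ : j <= k)%N); last lia.
by apply: deg_leM; apply: deg_leX; rewrite ?mdeg1; lia.
Qed.

Lemma C_bound_X c m : (mdeg m <= 2 * k)%N -> exists T : R, C (T%:MP - c *: 'X_[m]).
Proof.
rewrite mul2n -addnn => /mnm_split [m1 [m2 [dm1 dm2 ->]]].
pose c' := c / 2; have -> : c = 2 * c' by rewrite /c'; field.
exists (Rad ^+ mdeg m1 + c' ^+ 2 * Rad ^+ mdeg m2).
have -> : (Rad ^+ mdeg m1 + c' ^+ 2 * Rad ^+ mdeg m2)%:MP - (2 * c') *: 'X_[m1 + m2] =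
    1 *: ((Rad ^+ mdeg m1)%:MP - 'X_[m1] ^+ 2)
    + (c' ^+ 2 *: ((Rad ^+ mdeg m2)%:MP - 'X_[m2] ^+ 2) + ('X_[m1] - c' *: 'X_[m2]) ^+ 2).
  rewrite -!mul_mpolyC mpolyXD rmorphD /= !rmorphM /= !rmorphXn /= rmorph_nat rmorph1.
  by ring.
apply: CDZ => //; first exact: C_pow_sub_sqrX.
apply: CDZ; [exact: sqr_ge0 | exact: C_pow_sub_sqrX | apply: C_sqr].
by apply: deg_leD; [| apply/deg_leN/deg_leZ]; exact: deg_leX.
Qed.

Lemma C_archimedean p : deg_le p (2 * k) -> exists T : R, C (T%:MP - p).
Proof.
move=> /deg_leP dp; rewrite [p]mpolyE big_seq.
apply: (big_ind (fun q => exists T : R, C (T%:MP - q))).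
- by exists 0; rewrite raddf0 subrr.
- move=> q1 q2 [T1 C1] [T2 C2]; exists (T1 + T2).
  by rewrite rmorphD opprD addrACA; apply: CD.
- by move=> m /dp; apply: C_bound_X.
Qed.

End BallArchimedean.

Section RieszExtension.
Local Open Scope classical_set_scope.
Variables (R : realType) (V : lmodType R) (C : V -> Prop) (e : V).
Hypotheses (C0 : C 0) (CDZ : forall a x y, 0 <= a -> C x -> C y -> C (a *: x + y)).

Definition lsubspace (W : V -> Prop) :=
  W 0 /\ forall a x y, W x -> W y -> W (a *: x + y).
Definition linear_on (W : V -> Prop) (phi : V -> R) :=
  forall a x y, W x -> W y -> phi (a *: x + y) = a * phi x + phi y.
Definition positive_on (W : V -> Prop) (phi : V -> R) :=
  forall x, W x -> C x -> 0 <= phi x.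
Definition order_bounded v := (exists t, C (t *: e - v)) /\ (exists t, C (v + t *: e)).
Definition adjoin (W : V -> Prop) v : V -> Prop :=
  fun x => exists w s, W w /\ x = w + s *: v.
Definition lower_values (W : V -> Prop) (phi : V -> R) v : set R :=
  phi @` [set w | W w /\ C (v - w)].

Let CD x y : C x -> C y -> C (x + y).
Proof. by move=> Cx Cy; rewrite -[x]scale1r; apply: CDZ. Qed.

Let CZ a x : 0 <= a -> C x -> C (a *: x).
Proof. by move=> a_ge0 Cx; rewrite -[_ *: _]addr0; apply: CDZ. Qed.

Section LinearOn.
Variables (W : V -> Prop) (phi : V -> R).
Hypotheses (sW : lsubspace W) (lW : linear_on W phi).

Lemma lsubspaceZ a x : W x -> W (a *: x).
Proof. by move=> Wx; rewrite -[_ *: _]addr0; apply: sW.2 => //; apply: sW.1. Qed.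

Lemma lsubspaceD x y : W x -> W y -> W (x + y).
Proof. by move=> Wx Wy; rewrite -[x]scale1r; apply: sW.2. Qed.

Lemma lsubspaceB x y : W x -> W y -> W (x - y).
Proof. by move=> Wx Wy; rewrite -scaleN1r; apply: lsubspaceD => //; apply: lsubspaceZ. Qed.

Lemma linear_on0 : phi 0 = 0.
Proof. by have := lW 1 sW.1 sW.1; rewrite scale1r addr0 mul1r; lra. Qed.

Lemma linear_onZ a x : W x -> phi (a *: x) = a * phi x.
Proof. by move=> Wx; rewrite -[_ *: _]addr0 lW ?linear_on0 ?addr0 //; apply: sW.1. Qed.

Lemma linear_onD x y : W x -> W y -> phi (x + y) = phi x + phi y.
Proof. by move=> Wx Wy; rewrite -{1}[x]scale1r lW // mul1r. Qed.

Lemma linear_onB x y : W x -> W y -> phi (x - y) = phi x - phi y.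
Proof.
move=> Wx Wy; rewrite -[- y]scaleN1r linear_onD ?linear_onZ ?mulN1r //.
exact: lsubspaceZ.
Qed.

Lemma linear_on_sum (I : eqType) (r : seq I) (c : I -> R) (F : I -> V) :
  (forall i, i \in r -> W (F i)) ->
  W (\sum_(i <- r) c i *: F i) /\
  phi (\sum_(i <- r) c i *: F i) = \sum_(i <- r) c i * phi (F i).
Proof.
elim: r => [|i r IH] WF; first by rewrite !big_nil linear_on0; split=> //; apply: sW.1.
have WF' j : j \in r -> W (F j) by move=> rj; apply: WF; rewrite inE rj orbT.
have [Wr phir] := IH WF'.
have Wi : W (F i) by apply: WF; rewrite mem_head.
by rewrite !big_cons; split; [apply: sW.2 | rewrite lW ?phir].
Qed.

End LinearOn.

Section Step.
Variables (W : V -> Prop) (phi : V -> R) (v : V).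
Hypotheses (sW : lsubspace W) (lW : linear_on W phi) (pW : positive_on W phi).
Hypotheses (We : W e) (bv : order_bounded v).
Local Notation L := (lower_values W phi v).

Lemma lower_values_le w w' : W w -> W w' -> C (v - w) -> C (w' - v) -> phi w <= phi w'.
Proof.
move=> Ww Ww' Cvw Cw'v; rewrite -subr_ge0 -(linear_onB sW lW) //.
by apply: pW; [exact: (lsubspaceB sW) | rewrite -[w' - w](subrKA v); exact: CD].
Qed.

Lemma lower_values_nonempty : L !=set0.
Proof.
case: bv.2 => t Cvt; exists (phi (- t *: e)), (- t *: e) => //.
by split; [exact: (lsubspaceZ sW) | rewrite scaleNr opprK].
Qed.

Lemma lower_values_ubound : has_ubound L.
Proof.
case: bv.1 => t Ctv; exists (phi (t *: e)) => _ [w [Ww Cvw] <-].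
exact: lower_values_le (lsubspaceZ sW _ We) _ _.
Qed.

Lemma le_sup_lower_values w : W w -> C (v - w) -> phi w <= sup L.
Proof. by move=> Ww Cvw; apply: ub_le_sup lower_values_ubound _ _; exists w. Qed.

Lemma sup_lower_values_le w : W w -> C (w - v) -> sup L <= phi w.
Proof.
move=> Ww Cwv; apply: ge_sup lower_values_nonempty _ => _ [w' [Ww' Cvw'] <-].
exact: lower_values_le.
Qed.

Lemma adjoin_positive w s : W w -> C (w + s *: v) -> 0 <= phi w + s * sup L.
Proof.
move=> Ww; have [s_lt0|s_gt0|->] := ltgtP s 0 => Cwv; last first.
- by rewrite scale0r addr0 in Cwv; rewrite mul0r addr0 pW.
- have Cw' : C (v - (- s^-1 *: w)).
    rewrite -[X in C X](_ : s^-1 *: (w + s *: v) = _); last first.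
      by rewrite scalerDr scalerA mulVf ?gt_eqF // scale1r scaleNr opprK addrC.
    by apply: CZ Cwv; rewrite invr_ge0 ltW.
  have := le_sup_lower_values (lsubspaceZ sW _ Ww) Cw'.
  rewrite (linear_onZ sW lW) // mulNr lerNl ler_pdivlMl //; lra.
- have Ns_gt0 : 0 < - s by rewrite oppr_gt0.
  have Cw' : C ((- s)^-1 *: w - v).
    rewrite -[X in C X](_ : (- s)^-1 *: (w + s *: v) = _); last first.
      by rewrite scalerDr scalerA invrN mulNr mulVf ?ltr0_neq0 // scaleN1r.
    by apply: CZ Cwv; rewrite invr_ge0 ltW.
  have := sup_lower_values_le (lsubspaceZ sW _ Ww) Cw'.
  rewrite (linear_onZ sW lW) // ler_pdivlMl //; lra.
Qed.

Lemma adjoin_uniq w1 w2 s1 s2 : ~ W v -> W w1 -> W w2 ->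
  w1 + s1 *: v = w2 + s2 *: v -> w1 = w2 /\ s1 = s2.
Proof.
move=> nWv Ww1 Ww2 E; suff s12 : s1 = s2 by split=> //; move: E; rewrite s12 => /addIr.
apply/eqP/negPn/negP => s12; apply: nWv.
have -> : v = (s1 - s2)^-1 *: (w2 - w1).
  apply: (@scalerI _ _ (s1 - s2)); first by rewrite subr_eq0.
  rewrite scalerA mulfV ?subr_eq0 // scale1r scalerBl; apply/eqP.
  by rewrite subr_eq addrAC -E [w1 + _]addrC addrK.
by apply: (lsubspaceZ sW); apply: (lsubspaceB sW).
Qed.

Lemma riesz_step : exists phi' : V -> R,
  [/\ linear_on (adjoin W v) phi', positive_on (adjoin W v) phi',
      forall x, W x -> phi' x = phi x & phi' v = sup L].
Proof.
have [Wv|nWv] := pselect (W v).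
  have adjW x : adjoin W v x -> W x.
    by case=> w [s [Ww ->]]; apply: (lsubspaceD sW) => //; apply: (lsubspaceZ sW).
  exists phi; split=> //; first by move=> a x y /adjW ? /adjW ?; apply: lW.
    by move=> x /adjW; apply: pW.
  apply/eqP; rewrite eq_le le_sup_lower_values ?sup_lower_values_le ?subrr //.
have /choice [dec decE] : forall x, exists p : V * R,
    adjoin W v x -> W p.1 /\ x = p.1 + p.2 *: v.
  move=> x; have [[w [s [Ww ->]]] | nadj] := pselect (adjoin W v x).
    by exists (w, s).
  by exists (0, 0) => /nadj.
pose phi' x := phi (dec x).1 + (dec x).2 * sup L.
have phi'E w s : W w -> phi' (w + s *: v) = phi w + s * sup L.
  move=> Ww; have [|Wd Ed] := decE (w + s *: v); first by exists w, s.
  by rewrite /phi'; have [-> ->] := adjoin_uniq nWv Wd Ww (esym Ed).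
exists phi'; split.
- move=> a _ _ [w1 [s1 [Ww1 ->]]] [w2 [s2 [Ww2 ->]]].
  rewrite scalerDr scalerA addrACA -scalerDl !phi'E ?lW //; last exact: sW.2.
  by ring.
- by move=> _ [w [s [Ww ->]]] Cx; rewrite phi'E //; apply: adjoin_positive.
- by move=> x Wx; have := phi'E x 0 Wx; rewrite scale0r mul0r !addr0.
- by have := phi'E 0 1 sW.1; rewrite scale1r add0r (linear_on0 sW lW) mul1r add0r.
Qed.

End Step.

Lemma lsubspace_adjoin W v : lsubspace W -> lsubspace (adjoin W v).
Proof.
move=> sW; split; first by exists 0, 0; rewrite scale0r addr0; split=> //; apply: sW.1.
move=> a _ _ [w1 [s1 [Ww1 ->]]] [w2 [s2 [Ww2 ->]]]; exists (a *: w1 + w2), (a * s1 + s2).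
by rewrite scalerDr scalerA addrACA -scalerDl; split=> //; apply: sW.2.
Qed.

Lemma adjoin_self W v : lsubspace W -> adjoin W v v.
Proof. by move=> sW; exists 0, 1; rewrite scale1r add0r; split=> //; apply: sW.1. Qed.

Lemma adjoin_sub W v x : W x -> adjoin W v x.
Proof. by exists x, 0; rewrite scale0r addr0. Qed.

Lemma riesz_extension (s : seq V) W phi : lsubspace W -> linear_on W phi ->
    positive_on W phi -> W e -> (forall v, v \in s -> order_bounded v) ->
  exists W' phi', [/\ lsubspace W', linear_on W' phi', positive_on W' phi',
    forall x, W x -> W' x /\ phi' x = phi x & forall v, v \in s -> W' v].
Proof.
elim: s W phi => [|v s IH] W phi sW lW pW We bs; first by exists W, phi.
have [phi1 [lin1 pos1 ext1 _]] := riesz_step sW lW pW We (bs v (mem_head _ _)).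
have bs' u : u \in s -> order_bounded u by move=> su; apply: bs; rewrite inE su orbT.
have [W' [phi' [sW' lin' pos' ext' mem']]] :=
  IH _ _ (lsubspace_adjoin v sW) lin1 pos1 (adjoin_sub v We) bs'.
exists W', phi'; split=> // [x Wx|u].
  by have [W'x ->] := ext' x (adjoin_sub v Wx); rewrite ext1.
by rewrite inE => /predU1P[->|]; [exact: (ext' v (adjoin_self v sW)).1 | exact: mem'].
Qed.

End RieszExtension.

Lemma big_dfwith (V : nmodType) (I : finType) (T : I -> Type) (f : forall i, T i)
    (i0 : I) (x : T i0) (F : forall i, T i -> V) :
  \sum_i F i (dfwith f x i) = F i0 x + \sum_(i | i != i0) F i (f i).
Proof.
rewrite (bigD1 i0) //= dfwith_in; congr (_ + _).
by apply: eq_bigr => i ne_i; rewrite dfwith_out // eq_sym.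
Qed.

Section QuadraticModule.
Variables (R : realType) (n m l : nat).
Variables (g : 'I_m -> {mpoly R[n]}) (h : 'I_l -> {mpoly R[n]}) (k : nat).
Implicit Types (p q : {mpoly R[n]}).
Local Notation Tg := (fun i => 'M[R]_(sdim n (k - hdeg (g i)))).
Local Notation Th := (fun j => 'cV[R]_(sdim n (2 * (k - hdeg (h j))))).

(* [sos_feasible f g h k xi] unfolds to [qmodule g h k (f - xi%:MP)]. *)
Definition qmodule p : Prop :=
  exists G0 : 'M[R]_(sdim n k),
  exists G : forall i, 'M[R]_(sdim n (k - hdeg (g i))),
  exists u : forall j, 'cV[R]_(sdim n (2 * (k - hdeg (h j)))),
    [/\ psd G0, forall i, psd (G i) &
        p = gram G0 + \sum_i g i * gram (G i) + \sum_j h j * lin (u j)].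

Lemma qmodule0 : qmodule 0.
Proof.
exists 0, (fun=> 0), (fun=> 0); split=> [||]; try by move=> *; apply: psd0.
by rewrite !raddf0 !big1 ?addr0 // => i _; rewrite raddf0 mulr0.
Qed.

Lemma qmoduleDZ a p q : 0 <= a -> qmodule p -> qmodule q -> qmodule (a *: p + q).
Proof.
move=> a_ge0 [G0 [G [u [psdG0 psdG ->]]]] [H0 [H [v [psdH0 psdH ->]]]].
exists (a *: G0 + H0), (fun i => a *: G i + H i), (fun j => a *: u j + v j).
split=> [||]; first exact/psdD/psdH0/psdZ.
  by move=> i; apply/psdD/psdH/psdZ.
have sumG : \sum_i g i * gram (a *: G i + H i) =
    a *: \sum_i g i * gram (G i) + \sum_i g i * gram (H i).
  rewrite scaler_sumr -big_split; apply: eq_bigr => i _.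
  by rewrite gram_is_linear mulrDr scalerAr.
have sumu : \sum_j h j * lin (a *: u j + v j) =
    a *: \sum_j h j * lin (u j) + \sum_j h j * lin (v j).
  rewrite scaler_sumr -big_split; apply: eq_bigr => j _.
  by rewrite lin_is_linear mulrDr scalerAr.
by rewrite gram_is_linear sumG sumu !scalerDr; ring.
Qed.

Lemma qmodule_sqr p : deg_le p k -> qmodule (p ^+ 2).
Proof.
case/lin_surj => x <-; exists (x *m x^T), (fun=> 0), (fun=> 0).
split=> [||]; [exact: psd_xxT | by move=> i; apply: psd0 |].
by rewrite gram_xxT !big1 ?addr0 // => i _; rewrite raddf0 mulr0.
Qed.

Lemma qmodule_g_sqr i0 p : deg_le p (k - hdeg (g i0)) -> qmodule (g i0 * p ^+ 2).
Proof.
case/lin_surj => x <-; exists 0, (@dfwith _ Tg (fun=> 0) i0 (x *m x^T)), (fun=> 0).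
split=> [||]; first exact: psd0.
  by move=> i; case: dfwithP => [|j _]; [exact: psd_xxT | exact: psd0].
rewrite raddf0 add0r (big_dfwith _ _ (fun i (X : Tg i) => g i * gram X)) gram_xxT.
by rewrite !big1 ?addr0 // => *; rewrite raddf0 mulr0.
Qed.

Lemma qmodule_h j0 p : deg_le p (2 * (k - hdeg (h j0))) -> qmodule (h j0 * p).
Proof.
case/lin_surj => x <-; exists 0, (fun=> 0), (@dfwith _ Th (fun=> 0) j0 x).
split=> [||]; [exact: psd0 | by move=> i; apply: psd0 |].
rewrite raddf0 add0r (big_dfwith _ _ (fun j (x : Th j) => h j * lin x)).
by rewrite !big1 ?add0r ?addr0 // => *; rewrite raddf0 mulr0.
Qed.

Lemma qmodule_pd p : qmodule p ->
  exists G0 : 'M[R]_(sdim n k),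
  exists G : forall i, 'M[R]_(sdim n (k - hdeg (g i))),
  exists u : forall j, 'cV[R]_(sdim n (2 * (k - hdeg (h j)))),
    [/\ pd G0, forall i, pd (G i) &
        p + gram (1%:M : 'M[R]_(sdim n k))
          + \sum_i g i * gram (1%:M : 'M[R]_(sdim n (k - hdeg (g i))))
        = gram G0 + \sum_i g i * gram (G i) + \sum_j h j * lin (u j)].
Proof.
case=> G0 [G [u [psdG0 psdG ->]]].
exists (1%:M + G0), (fun i => 1%:M + G i), u; split=> [||]; first exact: pd_add1.
  by move=> i; apply: pd_add1.
under [in RHS]eq_bigr do rewrite raddfD mulrDr.
by rewrite raddfD big_split /=; ring.
Qed.

End QuadraticModule.

Section Relaxation.
Variables (R : realType) (n m l : nat).
Variables (f : {mpoly R[n]}) (g : 'I_m -> {mpoly R[n]}) (h : 'I_l -> {mpoly R[n]}).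
Variable k : nat.
Hypothesis le_kmin : (kmin f g h <= k)%N.
Local Notation Q := (qmodule g h k).

Lemma hdeg_f_le : (hdeg f <= k)%N.
Proof. exact: leq_trans (leq_maxl _ _) le_kmin. Qed.

Lemma hdeg_g_le i : (hdeg (g i) <= k)%N.
Proof.
apply: leq_trans le_kmin; rewrite /kmin (leq_trans _ (leq_maxr _ _)) //.
by rewrite (leq_trans _ (leq_maxl _ _)) // (@leq_bigmax _ (fun i => hdeg (g i)) i).
Qed.

Lemma hdeg_h_le j : (hdeg (h j) <= k)%N.
Proof.
apply: leq_trans le_kmin; rewrite /kmin (leq_trans _ (leq_maxr _ _)) //.
by rewrite (leq_trans _ (leq_maxr _ _)) // (@leq_bigmax _ (fun j => hdeg (h j)) j).
Qed.

Lemma deg_le_f : deg_le f (2 * k).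
Proof. by apply: deg_le_trans (deg_le_hdeg f) _; rewrite leq_mul2l hdeg_f_le orbT. Qed.

Lemma deg_le_g_mul i p : deg_le p (2 * (k - hdeg (g i))) -> deg_le (g i * p) (2 * k).
Proof.
move=> dp; apply: deg_le_trans (deg_leM (deg_le_hdeg (g i)) dp) _.
by have := hdeg_g_le i; lia.
Qed.

Lemma deg_le_h_mul j p : deg_le p (2 * (k - hdeg (h j))) -> deg_le (h j * p) (2 * k).
Proof.
move=> dp; apply: deg_le_trans (deg_leM (deg_le_hdeg (h j)) dp) _.
by have := hdeg_h_le j; lia.
Qed.

Lemma weak_duality xi (y : {ffun 'X_{1..n < (2 * k).+1} -> R}) :
  sos_feasible f g h k xi -> mom_feasible g h y ->
  xi <= Ly (yext y) f.
Proof.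
move=> [G0 [G [u [psdG0 psdG E]]]] [psdM y0 psdL locL0].
have h_part : \sum_j Ly (yext y) (h j * lin (u j)) = 0.
  by apply: big1 => j _; exact: Ly_mul_locM_eq0 (locL0 j) (deg_le_lin _).
have : 0 <= Ly (yext y) (f - xi%:MP).
  rewrite E !raddfD /= Ly_gram psdM.1 !raddf_sum /= h_part addr0.
  rewrite addr_ge0 ?psd_mxtrace_mul_ge0 // sumr_ge0 // => i _.
  by rewrite Ly_mul_gram (psdL i).1 psd_mxtrace_mul_ge0.
by rewrite raddfB /= LyC y0 mulr1 subr_ge0.
Qed.

Lemma rho_le_tau : (rho f g h k <= tau f g h k)%E.
Proof.
apply: ge_ereal_sup => _ [xi Sxi <-]; apply: le_ereal_inf_tmp => _ [y Fy <-].
by rewrite lee_fin weak_duality.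
Qed.

Lemma slater_feasible : sos_slater f g h k -> exists xi, sos_feasible f g h k xi.
Proof.
case=> xi [G0 [G [u [pdG0 pdG E]]]]; exists xi, G0, G, u.
by split=> // [|i]; apply: pd_psd.
Qed.

Lemma mom_feasible_of_positive (y : {ffun 'X_{1..n < (2 * k).+1} -> R}) :
  yext y 0%MM = 1 -> (forall p, deg_le p (2 * k) -> Q p -> 0 <= Ly (yext y) p) ->
  mom_feasible g h y.
Proof.
move=> y0 Lpos; split=> // [|i|j].
- have symM : (momM k (yext y))^T = momM k (yext y).
    by apply/matrixP => a b; rewrite !mxE addmC.
  split=> // x; rewrite -/(bform _ _ _) -mxtrace_mul_xxT -[in X in \tr X]symM -Ly_gram.
  by apply: Lpos; [exact: deg_le_gram | rewrite gram_xxT; exact/qmodule_sqr/deg_le_lin].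
- have symM : (locM (k - hdeg (g i)) (g i) (yext y))^T = locM (k - hdeg (g i)) (g i) (yext y).
    apply/matrixP => a b; rewrite !mxE; congr Ly; apply: funext => c.
    by rewrite (addmC (mon b)).
  split=> // x; rewrite -/(bform _ _ _) -mxtrace_mul_xxT -[in X in \tr X]symM -Ly_mul_gram.
  apply: Lpos; first exact/deg_le_g_mul/deg_le_gram.
  by rewrite gram_xxT; exact/qmodule_g_sqr/deg_le_lin.
- apply/matrixP => a b; rewrite !mxE -Ly_mulX.
  have dX : deg_le ('X_[mon a + mon b] : {mpoly R[n]}) (2 * (k - hdeg (h j))).
    by apply: deg_leX; rewrite mdegD; have := mon_mdeg a; have := mon_mdeg b; lia.
  have := Lpos _ (deg_le_h_mul (deg_leN dX)) (qmodule_h g (deg_leN dX)).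
  have := Lpos _ (deg_le_h_mul dX) (qmodule_h g dX).
  by rewrite mulrN raddfN /=; lra.
Qed.

Section Ball.
Variables (Rad : R) (i0 : 'I_m).
Hypotheses (Rad_gt0 : 0 < Rad) (g_ball : g i0 = Rad%:MP - \sum_(t < n) 'X_t ^+ 2).

Lemma hdeg_ball_le1 : (hdeg (g i0) <= 1)%N.
Proof.
have : deg_le (g i0) 2.
  rewrite g_ball; apply: deg_leD; first exact: deg_leC.
  by apply/deg_leN/deg_le_sum => t _; rewrite mpolyXn deg_leX // mdegMn mdeg1.
by rewrite deg_le_msize /hdeg /pdeg; case: (msize (g i0)) => [|[|[|[|s]]]].
Qed.

Lemma qmodule_archimedean p : deg_le p (2 * k) -> exists T : R, Q (T%:MP - p).
Proof.
apply: (C_archimedean Rad_gt0 (d := k - hdeg (g i0))).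
- by have := hdeg_ball_le1; lia.
- exact: qmodule0.
- exact: qmoduleDZ.
- exact: qmodule_sqr.
- by rewrite -g_ball; apply: qmodule_g_sqr.
Qed.

Lemma slater_of_ball : sos_slater f g h k.
Proof.
pose p := f - gram (1%:M : 'M[R]_(sdim n k))
            - \sum_i g i * gram (1%:M : 'M[R]_(sdim n (k - hdeg (g i)))).
have dp : deg_le p (2 * k).
  apply/deg_leD/deg_leN/deg_le_sum => [|i _]; last by apply/deg_le_g_mul/deg_le_gram.
  by apply/deg_leD/deg_leN/deg_le_gram; exact: deg_le_f.
have [T /qmodule_pd [G0 [G [u [pdG0 pdG E]]]]] := qmodule_archimedean (deg_leN dp).
exists (- T), G0, G, u; split=> //; rewrite /sos_identity -E /p.
by rewrite rmorphN opprK; ring.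
Qed.

End Ball.

End Relaxation.

Lemma Ly_yext_of_linear_on (R : realType) n k (W : {mpoly R[n]} -> Prop)
    (phi : {mpoly R[n]} -> R) :
  lsubspace W -> linear_on W phi -> (forall m, (mdeg m <= 2 * k)%N -> W 'X_[m]) ->
  forall p, deg_le p (2 * k) ->
    W p /\ Ly (yext [ffun a : 'X_{1..n < (2 * k).+1} => phi 'X_[bmnm a]]) p = phi p.
Proof.
move=> sW lW WX p /deg_leP dp.
have [Wp phip] := linear_on_sum sW lW (fun mm => p@_mm) (fun mm mm_p => WX mm (dp mm mm_p)).
rewrite -mpolyE in Wp phip; split=> //; rewrite phip /Ly big_seq [RHS]big_seq.
apply: eq_bigr => mm /dp le_mm; rewrite /yext; case: insubP => [a _ <- | ] /=.
  by rewrite ffunE.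
by rewrite ltnS le_mm.
Qed.

Section StrongDuality.
Local Open Scope classical_set_scope.
Variables (R : realType) (n m l : nat).
Variables (f : {mpoly R[n]}) (g : 'I_m -> {mpoly R[n]}) (h : 'I_l -> {mpoly R[n]}).
Variables (k : nat) (Rad : R) (i0 : 'I_m).
Hypotheses (le_kmin : (kmin f g h <= k)%N) (Rad_gt0 : 0 < Rad).
Hypothesis g_ball : g i0 = Rad%:MP - \sum_(t < n) 'X_t ^+ 2.
Local Notation Q := (qmodule g h k).
Local Notation S := (sos_feasible f g h k).
Local Notation constant := (fun p : {mpoly R[n]} => exists c : R, p = c%:MP).

Lemma qmodule_order_bounded p : deg_le p (2 * k) -> order_bounded Q 1 p.
Proof.
move=> dp; split.
  have [T QT] := qmodule_archimedean le_kmin Rad_gt0 g_ball dp.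
  by exists T; rewrite -alg_mpolyC in QT.
have [T QT] := qmodule_archimedean le_kmin Rad_gt0 g_ball (deg_leN dp).
by exists T; rewrite -alg_mpolyC opprK addrC in QT.
Qed.

Lemma constants_positive : has_ubound S -> (exists xi, S xi) ->
  positive_on Q constant (mcoeff 0%MM).
Proof.
(* A negative constant c in Q_k would make every xi - t c, t >= 0, feasible. *)
move=> [B ubB] [xi Sxi] _ [c ->] Qc; rewrite mcoeffC eqxx mulr1 leNgt.
apply/negP => c_lt0; pose t := (B - xi + 1) / - c.
have t_ge0 : 0 <= t.
  by rewrite divr_ge0 ?oppr_ge0 ?ltW //; have := ubB _ Sxi; lra.
have : Q (f - (xi - t * c)%:MP).
  have -> : f - (xi - t * c)%:MP = t *: c%:MP + (f - xi%:MP).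
    by rewrite rmorphB rmorphM /= -mul_mpolyC; ring.
  exact: qmoduleDZ.
have -> : xi - t * c = B + 1 by rewrite /t; field; exact: ltr0_neq0.
by move/ubB; lra.
Qed.

Lemma lower_values_constants : lower_values Q constant (mcoeff 0%MM) f = S.
Proof.
rewrite /lower_values; apply/seteqP; split=> [_ [_ [[c ->] Qfc] <-] | xi Sxi].
  by rewrite /= mcoeffC eqxx mulr1.
by exists xi%:MP; [split=> //; exists xi | rewrite mcoeffC eqxx mulr1].
Qed.

Lemma exists_positive_moments : has_ubound S -> (exists xi, S xi) ->
  exists y : {ffun 'X_{1..n < (2 * k).+1} -> R},
    [/\ yext y 0%MM = 1, Ly (yext y) f = sup S &
        forall p, deg_le p (2 * k) -> Q p -> 0 <= Ly (yext y) p].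
Proof.
move=> ubS exS.
have sW : lsubspace constant.
  split=> [|a _ _ [c1 ->] [c2 ->]]; first by exists 0; rewrite raddf0.
  by exists (a * c1 + c2); rewrite rmorphD rmorphM /= mul_mpolyC.
have lW : linear_on constant (mcoeff 0%MM) by move=> a x y _ _; rewrite mcoeffD mcoeffZ.
have W1 : constant 1 by exists 1; rewrite mpolyC1.
have QDZ := @qmoduleDZ _ _ _ _ g h k.
have [phi1 [lin1 pos1 ext1]] := riesz_step (qmodule0 g h k) QDZ sW lW
  (constants_positive ubS exS) W1 (qmodule_order_bounded (deg_le_f le_kmin)).
rewrite lower_values_constants => phi1f.
pose s := [seq 'X_[bmnm a] | a <- enum {: 'X_{1..n < (2 * k).+1}}] : seq {mpoly R[n]}.
have bs v : v \in s -> order_bounded Q 1 v.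
  by case/mapP => a _ ->; apply/qmodule_order_bounded/deg_leX; rewrite -ltnS bmdeg.
have [W' [phi' [sW' lin' pos' ext' sW'_in]]] := riesz_extension (qmodule0 g h k) QDZ
  (lsubspace_adjoin f sW) lin1 pos1 (adjoin_sub f W1) bs.
have WX mm : (mdeg mm <= 2 * k)%N -> W' 'X_[mm].
  by rewrite -ltnS => dm; apply: sW'_in; apply/mapP; exists (BMultinom dm); rewrite ?mem_enum.
have LyE := Ly_yext_of_linear_on sW' lin' WX.
exists [ffun a => phi' 'X_[bmnm a]]; split.
- have [_] := LyE 1%:MP (deg_leC _ _ _); rewrite LyC mul1r mpolyC1 => ->.
  by have [_ ->] := ext' 1 (adjoin_sub f W1); rewrite ext1 // mcoeff1 eqxx.
- by have [_ ->] := LyE f (deg_le_f le_kmin); have [_ ->] := ext' f (adjoin_self f sW).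
- by move=> p dp Qp; have [W'p ->] := LyE p dp; apply: pos'.
Qed.

Lemma strong_duality : has_ubound S -> (exists xi, S xi) ->
  exists y : {ffun 'X_{1..n < (2 * k).+1} -> R},
    mom_feasible g h y /\ Ly (yext y) f = sup S.
Proof.
move=> ubS exS; have [y [y0 yf ypos]] := exists_positive_moments ubS exS.
by exists y; split=> //; apply: (mom_feasible_of_positive le_kmin).
Qed.

Lemma tau_le_rho : (exists xi, S xi) -> (tau f g h k <= rho f g h k)%E.
Proof.
move=> exS; have [ubS|nubS] := pselect (has_ubound S); last first.
  by rewrite /rho hasNub_ereal_sup ?leey.
rewrite /rho ereal_sup_EFin //; have [y [Fy <-]] := strong_duality ubS exS.
by apply: ge_ereal_inf; exists (Ly (yext y) f)%:E => //; exists y.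
Qed.

End StrongDuality.

Theorem corollary1 (R : realType) (n m l : nat) (f : {mpoly R[n]})
  (g : 'I_m -> {mpoly R[n]}) (h : 'I_l -> {mpoly R[n]}) (Rad : R) :
  0 < Rad ->
  (exists i : 'I_m, g i = Rad%:MP - \sum_(t < n) 'X_t ^+ 2) ->
  forall k : nat, (kmin f g h <= k)%N ->
    sos_slater f g h k /\ rho f g h k = tau f g h k.
Proof.
move=> Rad_gt0 [i0 g_ball] k le_kmin.
have slater := slater_of_ball le_kmin Rad_gt0 g_ball.
split=> //; apply/eqP; rewrite eq_le rho_le_tau //=.
exact: tau_le_rho le_kmin Rad_gt0 g_ball (slater_feasible slater).
Qed.
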